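(* Let $M$ be a finite rectangular monoid generated by regular elements, and let $e,f\in E(M)$. (1) If $MeM$ and $MfM$ are incomparable, then every $m\in\mathrm{AIrr}_{\mathscr K(M)}(e,f)=\mathrm{Irr}_{\mathscr K(M)}(e,f)$ is of the form $ba$ with $Ma=Me$ and $bM=fM$. (2) If $MeM\subsetneq MfM$, then $\mathrm{AIrr}_{\mathscr K(M)}(e,f)=\{m\in fMe: Mm=Me\}$. (3) If $MeM\supsetneq MfM$, then $\mathrm{AIrr}_{\mathscr K(M)}(e,f)=\{m\in fMe: mM=fM\}$. (4) $\mathrm{AIrr}_{\mathscr K(M)}(e,e)=G_e$.
   Context: $E(M)$ idempotents; $M$ rectangular: each $\{g\in E(M): MgM=MeM\}$ closed under multiplication. $m$ is regular if $m\in mMm$. The Karoubi envelope $\mathscr K(M)$ has objects $E(M)$, morphisms $e\to f$ the elements of $fMe$, composition the product. A morphism $m$ is almost irreducible if whenever $m=gh$ in $\mathscr K(M)$, $h$ is a split monomorphism or $g$ is a split epimorphism; irreducible if in addition it is neither a split monomorphism nor a split epimorphism. $\mathrm{AIrr}_{\mathscr K(M)}(e,f)$, $\mathrm{Irr}_{\mathscr K(M)}(e,f)$ denote these sets. $G_e$ is the group of units of $eMe$. *)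

From mathcomp Require Import all_boot.
Set Implicit Arguments. Unset Strict Implicit. Unset Printing Implicit Defensive.

Record finMonoid := FinMonoid {
  carrier :> finType;
  mmul : carrier -> carrier -> carrier;
  mone : carrier;
  mmulA : forall x y z, mmul x (mmul y z) = mmul (mmul x y) z;
  mmul1m : forall x, mmul mone x = x;
  mmulm1 : forall x, mmul x mone = x }.

Section Defs.
Variable M : finMonoid.
Local Notation "x * y" := (mmul x y).

Definition idem (e : M) : Prop := e * e = e.
Definition regular (m : M) : bool := [exists x : M, m == m * x * m].
Definition lideal (a : M) : {set M} := [set u * a | u : M].
Definition rideal (a : M) : {set M} := [set a * u | u : M].
Definition jideal (a : M) : {set M} := [set u * a * v | u : M, v : M].

Definition rectangular : Prop :=
  forall e g h : M, idem e -> idem g -> idem h ->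
    jideal g = jideal e -> jideal h = jideal e ->
    idem (g * h) /\ jideal (g * h) = jideal e.

Definition gen_by_regular : Prop :=
  forall m : M, exists s : seq M, all regular s /\ m = foldr (@mmul M) (@mone M) s.

(* hom-sets of the Karoubi envelope: morphisms e -> f are elements of fMe *)
Definition hom (e f : M) (m : M) : Prop := exists x : M, m = f * x * e.

Definition split_mono (e k h : M) : Prop := exists r, hom k e r /\ r * h = e.
Definition split_epi (k f g : M) : Prop := exists s, hom f k s /\ g * s = f.

Definition AIrr (e f m : M) : Prop :=
  hom e f m /\
  forall k g h : M, idem k -> hom k f g -> hom e k h -> m = g * h ->
    split_mono e k h \/ split_epi k f g.
Definition Irr (e f m : M) : Prop :=
  AIrr e f m /\ ~ split_mono e f m /\ ~ split_epi e f m.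

Definition Ge (e m : M) : Prop :=
  hom e e m /\ exists x, hom e e x /\ m * x = e /\ x * m = e.
End Defs.

From mathcomp Require Import all_boot zify.
Set Implicit Arguments. Unset Strict Implicit. Unset Printing Implicit Defensive.

(* An almost irreducible m : e -> f factors through the idempotent y r for
   every regular letter r = r y r of a word for m; peeling the letters off
   one at a time shows m = G H with G R-equivalent to f and H L-equivalent
   to e.  If e <=_J f, say e = a f b, then with f = G s and e = r H the
   idempotents u = H r and z = (s b r)(H a G) are J-equivalent, so by
   rectangularity and stability of finite monoids u lies in M z u; since z
   ends with G and u H = H, this puts e in M G H, i.e. Mm = Me.  Dually
   mM = fM when f <=_J e.  Conversely, if Mm = Me (resp. mM = fM) then in
   every factorization m = g h the morphism h is a split mono (resp. g a
   split epi). *)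

Section Green.
Variable M : finMonoid.
Local Notation "x * y" := (mmul x y).

Definition leL (a b : M) := exists x, a = x * b.
Definition leR (a b : M) := exists x, a = b * x.
Definition leJ (a b : M) := exists x y, a = x * b * y.
Definition eqL (a b : M) := leL a b /\ leL b a.
Definition eqR (a b : M) := leR a b /\ leR b a.
Definition eqJ (a b : M) := leJ a b /\ leJ b a.

Lemma leL_refl a : leL a a. Proof. by exists (mone M); rewrite mmul1m. Qed.
Lemma leR_refl a : leR a a. Proof. by exists (mone M); rewrite mmulm1. Qed.
Lemma leJ_refl a : leJ a a.
Proof. by exists (mone M), (mone M); rewrite mmul1m mmulm1. Qed.

Lemma leL_trans b a c : leL a b -> leL b c -> leL a c.
Proof. by move=> [x ->] [y ->]; exists (x * y); rewrite mmulA. Qed.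
Lemma leR_trans b a c : leR a b -> leR b c -> leR a c.
Proof. by move=> [x ->] [y ->]; exists (y * x); rewrite mmulA. Qed.
Lemma leJ_trans b a c : leJ a b -> leJ b c -> leJ a c.
Proof.
by move=> [x [x' ->]] [y [y' ->]]; exists (x * y), (y' * x'); rewrite !mmulA.
Qed.

Lemma mem_lideal a c : c \in lideal a <-> leL c a.
Proof.
split; first by case/imsetP => u _ ->; exists u.
by case=> u ->; apply/imsetP; exists u.
Qed.

Lemma mem_rideal a c : c \in rideal a <-> leR c a.
Proof.
split; first by case/imsetP => u _ ->; exists u.
by case=> u ->; apply/imsetP; exists u.
Qed.

Lemma mem_jideal a c : c \in jideal a <-> leJ c a.
Proof.
split; first by case/imset2P => u v _ _ ->; exists u, v.
by case=> u [v ->]; apply/imset2P; exists u v.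
Qed.

Lemma lideal_eq a b : lideal a = lideal b <-> eqL a b.
Proof.
split=> [E | [ab ba]].
  by split; apply/mem_lideal; [rewrite -E | rewrite E]; apply/mem_lideal/leL_refl.
apply/setP => c; apply/idP/idP => /mem_lideal cx; apply/mem_lideal.
  exact: leL_trans ab.
exact: leL_trans ba.
Qed.

Lemma rideal_eq a b : rideal a = rideal b <-> eqR a b.
Proof.
split=> [E | [ab ba]].
  by split; apply/mem_rideal; [rewrite -E | rewrite E]; apply/mem_rideal/leR_refl.
apply/setP => c; apply/idP/idP => /mem_rideal cx; apply/mem_rideal.
  exact: leR_trans ab.
exact: leR_trans ba.
Qed.

Lemma jideal_sub a b : jideal a \subset jideal b <-> leJ a b.
Proof.
split=> [/subsetP sab | ab].
  by apply/mem_jideal/sab/mem_jideal/leJ_refl.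
by apply/subsetP => c /mem_jideal ca; apply/mem_jideal; apply: leJ_trans ab.
Qed.

Lemma jideal_eq a b : jideal a = jideal b <-> eqJ a b.
Proof.
rewrite /eqJ -!jideal_sub; split=> [-> // | [ab ba]].
by apply/eqP; rewrite eqEsubset ab ba.
Qed.

Fixpoint mpow (z : M) n := if n is n'.+1 then z * mpow z n' else mone M.

Lemma mpowD z m n : mpow z (m + n) = mpow z m * mpow z n.
Proof. by elim: m => [|m IH] /=; rewrite ?mmul1m // IH mmulA. Qed.

Lemma mpowSr z n : mpow z n.+1 = mpow z n * z.
Proof. by rewrite -addn1 mpowD /= mmulm1. Qed.

Lemma mpow_periodic z :
  exists a p, 0 < p /\ forall k, a <= k -> mpow z (k + p) = mpow z k.
Proof.
have /injectivePn [i [j neq_ij Eij]] :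
    ~~ injectiveb (fun i : 'I_#|M|.+1 => mpow z i).
  apply/injectiveP => /leq_card; by rewrite card_ord ltnn.
have {neq_ij Eij} [a [b [lt_ab Eab]]] : exists a b, a < b /\ mpow z a = mpow z b.
  case: (ltngtP i j) => [lt_ij | lt_ji | /val_inj eq_ij].
  - by exists i, j.
  - by exists j, i.
  - by rewrite eq_ij eqxx in neq_ij.
exists a, (b - a); split=> [|k le_ak]; first by rewrite subn_gt0.
by rewrite -(subnK le_ak) -addnA subnKC 1?ltnW // mpowD -Eab -mpowD.
Qed.

Lemma exists_idem_mpow z : exists2 n, 0 < n & idem (mpow z n).
Proof.
have [a [p [p_gt0 per]]] := mpow_periodic z.
have perN t k : a <= k -> mpow z (k + t * p)%N = mpow z k.
  elim: t k => [|t IH] k le_ak; first by rewrite mul0n addn0.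
  by rewrite mulSn addnCA addnC per ?IH //; lia.
exists (a.+1 * p)%N; first by rewrite muln_gt0.
by rewrite /idem -mpowD perN //; nia.
Qed.

Lemma leL_stable a b : leL a b -> leJ b a -> leL b a.
Proof.
move=> [t ->] [x [y Eb]].
have Ebn n : b = mpow (x * t) n * b * mpow y n.
  elim: n => [|n IH]; first by rewrite /= mmul1m mmulm1.
  by rewrite [mpow (x * t) _]mpowSr /= {1}IH {1}Eb !mmulA.
have [[|n] // _ idn] := exists_idem_mpow (x * t).
have {}Eb : b = mpow (x * t) n.+1 * b.
  move: idn (Ebn n.+1); move: (mpow (x * t) n.+1) (mpow y n.+1) => P Q iP E.
  by rewrite {1}E {2}E !mmulA iP.
by exists (mpow (x * t) n * x); rewrite {1}Eb mpowSr !mmulA.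
Qed.

Lemma rectangular_leL_mul u z : rectangular M -> idem u -> idem z ->
  eqJ u z -> leL u (z * u).
Proof.
move=> rect iu iz [uz zu].
have Jzu : jideal z = jideal u by apply/jideal_eq.
have [_ /jideal_eq [_ u_zu]] := rect u z u iu iz iu Jzu erefl.
by apply: leL_stable u_zu; exists z.
Qed.

Lemma leL_mul_of_eqR_eqL (e f G H : M) : rectangular M -> idem e -> idem f ->
  eqR G f -> eqL H e -> leJ e f -> leL e (G * H).
Proof.
move=> rect ie if_ [[x EG] [s Ef]] [[y EH] [r Ee]] [a [b Eab]].
have GsG : G * (s * G) = G by rewrite mmulA -Ef EG mmulA if_.
have He : H * e = H by rewrite EH -mmulA ie.
have HrH : H * r * H = H by rewrite -mmulA -Ee He.
pose u := H * r; pose p := H * a * G; pose q := s * b * r; pose z := q * p.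
have pq : p * q = u.
  transitivity (H * (a * (G * s) * b) * r); first by rewrite !mmulA.
  by rewrite -Ef -Eab He.
have up : u * p = p by rewrite /u /p !mmulA HrH.
have iu : idem u by rewrite /idem /u mmulA HrH.
have iz : idem z by rewrite /idem /z -mmulA (mmulA p) pq up.
have [t Eu] : leL u (z * u).
  apply: rectangular_leL_mul => //; split.
    by exists p, q; rewrite /z mmulA pq up pq.
  by exists q, p; rewrite -mmulA up.
have zsG : z * s * G = z by rewrite /z /p -!mmulA GsG.
(* e = r H = r (u H) = r t z u H = r t (z s G) H *)
exists (r * t * z * s).
by rewrite Ee -{1}HrH -/u Eu -{1}zsG -{2}HrH !mmulA.
Qed.

End Green.

Definition Mop (M : finMonoid) : finMonoid :=
  @FinMonoid M (fun x y => mmul y x) (mone M)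
    (fun x y z => esym (mmulA z y x)) (@mmulm1 M) (@mmul1m M).

Lemma leJ_op (M : finMonoid) (a b : M) : @leJ (Mop M) a b <-> leJ a b.
Proof. by split; case=> x [y ->]; exists y, x; rewrite /= mmulA. Qed.

Lemma jideal_op (M : finMonoid) (a : M) : @jideal (Mop M) a = jideal a.
Proof.
by apply/setP => c; apply/imset2P/imset2P => -[u v _ _ ->]; exists v u;
  rewrite //= mmulA.
Qed.

Lemma rectangular_op (M : finMonoid) : rectangular M -> rectangular (Mop M).
Proof.
move=> rect e g h ie ig ih; rewrite !jideal_op => ge he.
by have [] := rect e h g ie ih ig he ge; rewrite -jideal_op.
Qed.

Section Morphisms.
Variable M : finMonoid.
Local Notation "x * y" := (mmul x y).

Lemma leR_mul_of_eqR_eqL (e f G H : M) : rectangular M -> idem e -> idem f ->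
  eqR G f -> eqL H e -> leJ f e -> leR f (G * H).
Proof.
move=> rect ie if_ eqR_Gf eqL_He /leJ_op Jfe.
exact: (@leL_mul_of_eqR_eqL (Mop M) f e H G (rectangular_op rect)).
Qed.

Lemma hom_leL (e f m : M) : hom e f m -> leL m e.
Proof. by case=> x ->; exists (f * x). Qed.

Lemma hom_leR (e f m : M) : hom e f m -> leR m f.
Proof. by case=> x ->; exists (x * e); rewrite mmulA. Qed.

Lemma split_mono_leJ (e f m : M) : hom e f m -> split_mono e f m -> leJ e f.
Proof. by case=> x -> [r [_ <-]]; exists r, (x * e); rewrite !mmulA. Qed.

Lemma split_epi_leJ (e f m : M) : hom e f m -> split_epi e f m -> leJ f e.
Proof. by case=> x -> [s [_ <-]]; exists (f * x), s. Qed.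

Lemma AIrr_of_leL (e f m : M) : idem e -> hom e f m -> leL e m -> AIrr e f m.
Proof.
move=> ie hom_m [t Et]; split=> // k g h ik _ [y Eh] Em; left.
exists (e * t * g * k); split; first by exists (t * g); rewrite !mmulA.
have kh : k * h = h by rewrite Eh !mmulA ik.
by rewrite -mmulA kh -!mmulA -Em -Et ie.
Qed.

Lemma AIrr_of_leR (e f m : M) : idem f -> hom e f m -> leR f m -> AIrr e f m.
Proof.
move=> if_ hom_m [t Et]; split=> // k g h ik [y Eg] _ Em; right.
exists (k * h * t * f); split; first by exists (h * t); rewrite !mmulA.
have gk : g * k = g by rewrite Eg -mmulA ik.
transitivity (g * k * h * t * f); first by rewrite !mmulA.
by rewrite gk -Em -Et if_.
Qed.

Lemma AIrr_factor (e f m : M) : gen_by_regular M -> AIrr e f m ->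
  exists G H, [/\ eqR G f, eqL H e & m = G * H].
Proof.
move=> gen [[x Em] irr]; have [s [reg_s Ex]] := gen x.
suff factor : forall (w : seq M) (G : M), all (@regular M) w -> eqR G f ->
    m = G * foldr (@mmul M) (mone M) w * e ->
    exists G H, [/\ eqR G f, eqL H e & m = G * H].
  by apply: (factor s f reg_s (conj (leR_refl f) (leR_refl f))); rewrite -Ex.
elim=> [|r w IH] G /=.
  move=> _ eqR_Gf ->; exists G, e; split=> //; last by rewrite mmulm1.
  by split; apply: leL_refl.
case/andP => /existsP [y /eqP Er] reg_w eqR_Gf; have [[x0 EG] _] := eqR_Gf.
set v := foldr _ _ w => Em'.
have rcr X : X * r * y * r = X * r by rewrite [in RHS]Er !mmulA.
have ic : idem (y * r) by rewrite /idem mmulA rcr.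
have hom_g : hom (y * r) f (G * r) by exists (x0 * r); rewrite EG !mmulA rcr.
have hom_h : hom e (y * r) (y * r * v * e) by exists v.
have Egh : m = G * r * (y * r * v * e) by rewrite Em' !mmulA rcr.
case: (irr _ _ _ ic hom_g hom_h Egh) => [[r' [_ Er']] | [s' [_ Es']]].
- exists G, (r * v * e); split=> //; last by rewrite Em' !mmulA.
  split; first by exists (r * v).
  by exists (r' * y); rewrite -{1}Er' !mmulA.
- apply: (IH (G * r)) => //; last by rewrite Em' !mmulA.
  by split; [exists (x0 * r); rewrite EG mmulA | exists s'; rewrite Es'].
Qed.

Lemma AIrr_leL (e f m : M) : rectangular M -> gen_by_regular M ->
  idem e -> idem f -> AIrr e f m -> leJ e f -> leL e m.
Proof.
move=> rect gen ie if_ irr Jef.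
have [G [H [eqR_Gf eqL_He ->]]] := AIrr_factor gen irr.
exact: leL_mul_of_eqR_eqL rect ie if_ eqR_Gf eqL_He Jef.
Qed.

Lemma AIrr_leR (e f m : M) : rectangular M -> gen_by_regular M ->
  idem e -> idem f -> AIrr e f m -> leJ f e -> leR f m.
Proof.
move=> rect gen ie if_ irr Jfe.
have [G [H [eqR_Gf eqL_He ->]]] := AIrr_factor gen irr.
exact: leR_mul_of_eqR_eqL rect ie if_ eqR_Gf eqL_He Jfe.
Qed.

(* A left inverse e t e and a right inverse e t' e of m in eMe coincide. *)
Lemma Ge_of_leL_leR (e m : M) : idem e -> hom e e m -> leL e m -> leR e m -> Ge e m.
Proof.
move=> ie [y Em] [t Et] [t' Et']; split; first by exists y.
have me : m * e = m by rewrite Em -mmulA ie.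
have em : e * m = m by rewrite Em !mmulA ie.
have left_inv : e * t * e * m = e by rewrite -mmulA em -mmulA -Et ie.
have right_inv : m * (e * t' * e) = e by rewrite !mmulA me -Et' ie.
have left_eq_right : e * t * e = e * t' * e.
  transitivity (e * t * e * (m * (e * t' * e))).
    by rewrite right_inv -[RHS]mmulA ie.
  by rewrite mmulA left_inv !mmulA ie.
exists (e * t * e); split; first by exists t.
by split; [rewrite left_eq_right |].
Qed.

End Morphisms.

Theorem mainTheorem18 (M : finMonoid) (e f : M) :
  rectangular M -> gen_by_regular M -> idem e -> idem f ->
  [/\ (* (1) MeM and MfM incomparable *)
      (~~ (jideal e \subset jideal f) -> ~~ (jideal f \subset jideal e) ->
        forall m : M, (AIrr e f m <-> Irr e f m) /\
          (AIrr e f m -> exists a b : M,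
             [/\ lideal a = lideal e, rideal b = rideal f & m = mmul b a])),
      (* (2) MeM strictly contained in MfM *)
      (jideal e \proper jideal f ->
        forall m : M, AIrr e f m <-> (hom e f m /\ lideal m = lideal e)),
      (* (3) MfM strictly contained in MeM *)
      (jideal f \proper jideal e ->
        forall m : M, AIrr e f m <-> (hom e f m /\ rideal m = rideal f))
    & (* (4) *)
      (forall m : M, AIrr e e m <-> Ge e m)].
Proof.
move=> rect gen ie if_; split.
- move=> /negP not_ef /negP not_fe m; split.
    split=> [irr | []//]; split=> //; case: irr => hom_m _.
    by split=> [/(split_mono_leJ hom_m) | /(split_epi_leJ hom_m)] /jideal_sub.
  move=> /(AIrr_factor gen) [G [H [eqR_Gf eqL_He ->]]].
  by exists H, G; split=> //; [apply/lideal_eq | apply/rideal_eq].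
- rewrite properE => /andP [/jideal_sub Jef _] m; split=> [irr | [hom_m /lideal_eq [_ Lem]]].
    split; first by case: irr.
    by apply/lideal_eq; split; [apply: hom_leL (proj1 irr) | apply: AIrr_leL irr Jef].
  exact: AIrr_of_leL.
- rewrite properE => /andP [/jideal_sub Jfe _] m; split=> [irr | [hom_m /rideal_eq [_ Rfm]]].
    split; first by case: irr.
    by apply/rideal_eq; split; [apply: hom_leR (proj1 irr) | apply: AIrr_leR irr Jfe].
  exact: AIrr_of_leR.
- move=> m; split=> [irr | [hom_m [x [_ [mx _]]]]].
    apply: Ge_of_leL_leR (proj1 irr) _ _ => //.
      exact: AIrr_leL irr (leJ_refl e).
    exact: AIrr_leR irr (leJ_refl e).
  by apply: AIrr_of_leR hom_m _ => //; exists x.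
Qed.
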